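(* Consider a word $uaav$ with $a \in A$ and $|ua| = i$. Then $x_i \neq x_{i+1}$ and $y_i \neq y_{i+1}$.
   Context: $A$ is a finite alphabet. An $\mathsf{X}$-ranker is a nonempty word over $\{\mathsf{X}_a : a\in A\}$ (''go to the next $a$-position'', starting with the first $a$-position) and a $\mathsf{Y}$-ranker a nonempty word over $\{\mathsf{Y}_a : a\in A\}$ (''go to the previous $a$-position'', starting with the last $a$-position). The attribute of position $i$ is $(x_i,y_i)$, where $x_i$ (resp. $y_i$) is the length of a shortest $\mathsf{X}$-ranker (resp. $\mathsf{Y}$-ranker) reaching $i$. *)

From mathcomp Require Import all_boot.
From Stdlib Require Import ClassicalEpsilon.
Set Implicit Arguments. Unset Strict Implicit. Unset Printing Implicit Defensive.

Section Rankers.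
Variable A : finType.

(* Positions of a word w are 1, ..., size w; letter at position j is nth _ w j.-1.
   Virtual start positions: 0 for X-rankers, (size w).+1 for Y-rankers. *)

Definition Xnext (w : seq A) (b : A) (p : nat) : option nat :=
  let s := drop p w in
  let k := find (pred1 b) s in
  if k < size s then Some (p + k).+1 else None.

Definition Ynext (w : seq A) (b : A) (p : nat) : option nat :=
  let s := rev (take p.-1 w) in
  let k := find (pred1 b) s in
  if k < size s then Some (p.-1 - k) else None.

(* Apply the ranker letters left to right. X_b is represented by b. *)
Definition Xrun (w : seq A) (r : seq A) : option nat :=
  foldl (fun o b => obind (Xnext w b) o) (Some 0) r.
Definition Yrun (w : seq A) (r : seq A) : option nat :=
  foldl (fun o b => obind (Ynext w b) o) (Some (size w).+1) r.

Definition Xreach (w : seq A) (i n : nat) : bool :=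
  [exists t : n.-tuple A, (0 < n) && (Xrun w t == Some i)].
Definition Yreach (w : seq A) (i n : nat) : bool :=
  [exists t : n.-tuple A, (0 < n) && (Yrun w t == Some i)].

(* Attribute (x_i, y_i): length of a shortest ranker reaching i
   (default 0 if none reaches i, which never happens for valid positions). *)
Definition xattr (w : seq A) (i : nat) : nat :=
  match excluded_middle_informative (exists n, Xreach w i n) with
  | left H => ex_minn H
  | right _ => 0
  end.
Definition yattr (w : seq A) (i : nat) : nat :=
  match excluded_middle_informative (exists n, Yreach w i n) with
  | left H => ex_minn H
  | right _ => 0
  end.
End Rankers.

(** Both letters of a factor [aa] are [a]-positions, so the only way for [X_a]
    to land on the second one is to start from the first one.  Hence a shortest
    X-ranker reaching position [i+1] minus its last letter reaches [i], and
    [x_i < x_(i+1)].  Reading the word backwards turns Y-rankers into X-rankers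
    (position [j] of [w] becomes position [|w|+1-j] of [rev w]), which gives
    [y_(i+1) < y_i] from the same argument. *)

From mathcomp Require Import all_boot.
From mathcomp Require Import zify.
From Stdlib Require Import ClassicalEpsilon.
Set Implicit Arguments. Unset Strict Implicit. Unset Printing Implicit Defensive.

Section Rankers.
Variable A : finType.
Implicit Types (w r : seq A) (a b : A).

Lemma Xrun_rcons w r b : Xrun w (rcons r b) = obind (Xnext w b) (Xrun w r).
Proof. by rewrite /Xrun foldl_rcons. Qed.

Lemma Yrun_rcons w r b : Yrun w (rcons r b) = obind (Ynext w b) (Yrun w r).
Proof. by rewrite /Yrun foldl_rcons. Qed.

Lemma XnextP x0 w b p q : Xnext w b p = Some q.+1 ->
  [/\ p <= q, nth x0 w q = b & forall k, p <= k < q -> nth x0 w k != b].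
Proof.
rewrite /Xnext; case: ifP => // found [<-]; split; first exact: leq_addr.
  by have /eqP := nth_find x0 (etrans (has_find _ _) found); rewrite nth_drop.
move=> k /andP[le_pk lt_kq]; apply/negbT.
rewrite -(subnKC le_pk) -nth_drop.
have lt_find : k - p < find (pred1 b) (drop p w) by rewrite ltn_subLR.
by have /= := before_find x0 lt_find.
Qed.

Lemma Xrun_prefix w r : Xrun (r ++ w) r = Some (size r).
Proof.
elim/last_ind: r w => [|r c IH] w //.
rewrite Xrun_rcons cat_rcons IH /= /Xnext drop_size_cat //= eqxx /=.
by rewrite size_rcons addn0.
Qed.

Lemma Xreach_run w r q : 0 < size r -> Xrun w r = Some q -> Xreach w q (size r).
Proof. by move=> r_gt0 run_r; apply/existsP; exists (in_tuple r); rewrite r_gt0 /= run_r. Qed.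

Lemma Xreach_gt0 w i n : Xreach w i n -> 0 < n.
Proof. by case/existsP => t /andP[]. Qed.

Lemma xattr_reach w i n : Xreach w i n -> Xreach w i (xattr w i).
Proof.
move=> reach_n; rewrite /xattr; case: excluded_middle_informative => [ex|[]].
  by case: ex_minnP.
by exists n.
Qed.

Lemma xattr_min w i n : Xreach w i n -> xattr w i <= n.
Proof.
move=> reach_n; rewrite /xattr; case: excluded_middle_informative => [ex|[]].
  by case: ex_minnP => m _; apply.
by exists n.
Qed.

Lemma Ynext_rev w b q :
  Ynext w b ((size w).+1 - q) = omap (fun p => (size w).+1 - p) (Xnext (rev w) b q).
Proof.
case: (leqP q (size w)) => [le_qw|lt_wq]; last first.
  rewrite /Ynext /Xnext (_ : _ - q = 0); last by lia.
  by rewrite /= take0 drop_oversize // size_rev ltnW.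
rewrite /Ynext /Xnext subSn //= drop_rev size_rev size_takel ?leq_subr //.
by case: ifP => //= _; congr Some; lia.
Qed.

Lemma Yrun_rev w r : Yrun w r = omap (fun p => (size w).+1 - p) (Xrun (rev w) r).
Proof.
elim/last_ind: r => [|r b IH]; first by rewrite /Yrun /Xrun /= subn0.
by rewrite Yrun_rcons Xrun_rcons IH; case: (Xrun (rev w) r) => //= q; rewrite Ynext_rev.
Qed.

Lemma yattr_rev w i : 0 < i <= (size w).+1 ->
  yattr w i = xattr (rev w) ((size w).+1 - i).
Proof.
move=> i_range; have reach_rev n : Yreach w i n = Xreach (rev w) ((size w).+1 - i) n.
  apply: eq_existsb => t; rewrite Yrun_rev; congr (_ && _).
  by case: (Xrun _ _) => //= q; apply/eqP/eqP => -[eq_q]; congr Some; lia.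
rewrite /yattr /xattr.
case: excluded_middle_informative => [exY|noY];
  case: excluded_middle_informative => [exX|noX] //.
- exact: eq_ex_minn.
- by case: noX; case: exY => n; exists n; rewrite -reach_rev.
- by case: noY; case: exX => n; exists n; rewrite reach_rev.
Qed.

Section DoubleLetter.
Variables (x0 a : A) (w : seq A) (j : nat).
Hypotheses (wj : nth x0 w j = a) (wj1 : nth x0 w j.+1 = a).

Lemma Xnext_double b p : Xnext w b p = Some j.+2 -> p = j.+1.
Proof.
case/(XnextP x0) => le_pj1; rewrite wj1 => <- first_a.
have [lt_pj1|//] : p < j.+1 \/ p = j.+1 by lia.
by have := first_a j; rewrite wj eqxx ltnSn andbT => /(_ lt_pj1).
Qed.

Lemma Xreach_double n : Xreach w j.+2 n -> Xreach w j.+1 n.-1.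
Proof.
case/existsP => -[s /eqP size_s] /andP[_ /eqP /= run_s]; subst n.
case/lastP: s run_s => [|r b] //; rewrite Xrun_rcons size_rcons.
case run_r: (Xrun w r) => [p|] //= /Xnext_double eq_p; subst p.
have r_gt0 : 0 < size r by case: r run_r => // -[].
exact: Xreach_run.
Qed.

End DoubleLetter.

Lemma xattr_double_lt u v a :
  xattr (u ++ a :: a :: v) (size u).+1 < xattr (u ++ a :: a :: v) (size u).+2.
Proof.
set w := u ++ _.
have wj : nth a w (size u) = a by rewrite nth_cat ltnn subnn.
have wj1 : nth a w (size u).+1 = a by rewrite nth_cat ltnNge leqnSn subSnn.
have reach2 : Xreach w (size u).+2 (size (u ++ [:: a; a])).
  apply: Xreach_run; first by rewrite size_cat addn2.
  by rewrite /w (_ : _ :: _ = [:: a; a] ++ v) // catA Xrun_prefix size_cat addn2.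
have /Xreach_gt0 x2_gt0 := xattr_reach reach2.
have /xattr_min := Xreach_double wj wj1 (xattr_reach reach2).
by rewrite -ltnS prednK.
Qed.

Lemma yattr_double_lt u v a :
  yattr (u ++ a :: a :: v) (size u).+2 < yattr (u ++ a :: a :: v) (size u).+1.
Proof.
have rev_w : rev (u ++ a :: a :: v) = rev v ++ a :: a :: rev u.
  by rewrite rev_cat !rev_cons -!cats1 -!catA.
have size_w : size (u ++ a :: a :: v) = size u + size (rev v) + 2.
  by rewrite size_cat size_rev /=; lia.
rewrite !yattr_rev ?size_w; [|lia..].
have -> : (size u + size (rev v) + 2).+1 - (size u).+2 = (size (rev v)).+1 by lia.
have -> : (size u + size (rev v) + 2).+1 - (size u).+1 = (size (rev v)).+2 by lia.
by rewrite rev_w xattr_double_lt.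
Qed.

End Rankers.

Theorem lemma19 (A : finType) (u v : seq A) (a : A) (i : nat) :
  i = size (u ++ [:: a]) ->
  xattr (u ++ a :: a :: v) i <> xattr (u ++ a :: a :: v) i.+1 /\
  yattr (u ++ a :: a :: v) i <> yattr (u ++ a :: a :: v) i.+1.
Proof.
rewrite size_cat addn1 => ->; split; apply/eqP.
- by rewrite ltn_eqF // xattr_double_lt.
- by rewrite gtn_eqF // yattr_double_lt.
Qed.
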